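(* Let $X$ and $Y$ be $T_1$ topological spaces that are peripherally Hausdorff with $\mathrm{rank}_{T_2}(X)=\alpha$ and $\mathrm{rank}_{T_2}(Y)=\beta$. Then $X\times Y$ (with the product topology) is peripherally Hausdorff and $\mathrm{rank}_{T_2}(X\times Y)=\max(\alpha,\beta)$.
   Context: For a topological space $X$ and $x\in X$, let $[x]:=\bigcap\{\overline{U}:U \text{ an open neighbourhood of } x\}$. Define $\alpha$-Hausdorff spaces by transfinite recursion: a space is $0$-Hausdorff if it is Hausdorff; for an ordinal $\alpha>0$, a $T_1$ space $X$ is $\alpha$-Hausdorff if for every $x\in X$ the subspace $[x]$ is $\beta_x$-Hausdorff for some ordinal $\beta_x<\alpha$. A space is peripherally Hausdorff if it is $\alpha$-Hausdorff for some ordinal $\alpha$, and then $\mathrm{rank}_{T_2}(X):=\min\{\alpha: X \text{ is } \alpha\text{-Hausdorff}\}$. *)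

From HB Require Import structures.
From mathcomp Require Import all_boot all_order.
From mathcomp Require Import all_classical all_reals all_analysis.
Set Implicit Arguments. Unset Strict Implicit. Unset Printing Implicit Defensive.
Local Open Scope classical_set_scope.

(** * Ordinals (Aczel / Brouwer tree ordinals, classically these model the
    ordinals up to the equivalence  a <= b /\ b <= a). *)
Inductive Ord : Type := osup : forall (I : Type), (I -> Ord) -> Ord.

Fixpoint ole (a b : Ord) : Prop :=
  match a, b with
  | @osup Ii f, @osup Jj g => forall i : Ii, exists j : Jj, ole (f i) (g j)
  end.

Definition olt (a b : Ord) : Prop :=
  match b with @osup Jj g => exists j : Jj, ole a (g j) end.

Definition ozero : Ord := osup (fun e : False => match e with end).

Definition omax (a b : Ord) : Ord :=
  match a, b with
  | @osup Ii f, @osup Jj g =>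
      osup (fun k : Ii + Jj => match k with inl i => f i | inr j => g j end)
  end.

(** * Subspace notions, for a subset [A] of a topological space [T]
    carrying the subspace topology. *)
Section Subspace.
Context {T : topologicalType}.

Definition sub_hausdorff (A : set T) : Prop :=
  forall x y, A x -> A y -> x <> y ->
  exists U V : set T, [/\ open U, open V, U x, V y & U `&` V `&` A = set0].

Definition sub_T1 (A : set T) : Prop :=
  forall x y, A x -> A y -> x <> y ->
  exists U : set T, [/\ open U, U x & ~ U y].

(** [x] computed in the subspace A:  the intersection of the closures (in A)
    of all open neighbourhoods (in A) of x.  Open sets of A are U `&` A with U
    open in T, and the closure in A of a set B ⊆ A is closure B `&` A. *)
Definition sub_bracket (A : set T) (x : T) : set T :=
  [set y | A y /\ forall U : set T, open U -> U x -> closure (U `&` A) y].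

Inductive sub_alpha_hausdorff : Ord -> set T -> Prop :=
| SAH0 : forall (a : Ord) (A : set T),
    ole a ozero -> sub_hausdorff A -> sub_alpha_hausdorff a A
| SAHS : forall (a : Ord) (A : set T),
    ~ ole a ozero -> sub_T1 A ->
    (forall x, A x -> exists b, olt b a /\ sub_alpha_hausdorff b (sub_bracket A x)) ->
    sub_alpha_hausdorff a A.

End Subspace.

Definition alpha_hausdorff (T : topologicalType) (a : Ord) : Prop :=
  sub_alpha_hausdorff a [set: T].

Definition peripherally_hausdorff (T : topologicalType) : Prop :=
  exists a, alpha_hausdorff T a.

Definition rankT2_is (T : topologicalType) (a : Ord) : Prop :=
  alpha_hausdorff T a /\ forall b, alpha_hausdorff T b -> ole a b.

From HB Require Import structures.
From mathcomp Require Import all_boot all_order.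
From mathcomp Require Import all_classical all_reals all_analysis.
Set Implicit Arguments. Unset Strict Implicit. Unset Printing Implicit Defensive.
Local Open Scope classical_set_scope.

(* The bracket of a point of A x B lies in the product of the brackets of its
   coordinates, and Hausdorffness and T1 pass to products; so by well-founded
   induction on g, an a-Hausdorff A and a b-Hausdorff B with a, b <= g have a
   g-Hausdorff product, giving rank(X x Y) <= max(a, b).  Conversely, being
   g-Hausdorff pulls back along continuous injections, in particular to the
   slices X x {y} and {x} x Y, so rank X and rank Y are at most rank(X x Y). *)

Lemma ole_refl a : ole a a.
Proof. by elim: a => I f IH /= i; exists i. Qed.

Lemma ole_trans a b c : ole a b -> ole b c -> ole a c.
Proof.
elim: a b c => I f IH [J g] [K h] /= ab bc i.
have [j fg] := ab i; have [k gh] := bc j; exists k; exact: IH fg gh.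
Qed.

Lemma oltW a b : olt a b -> ole a b.
Proof.
elim: a b => I f IH [J g] /= [j ag] i; exists j.
by apply: IH; case: (g j) ag => K h /=; apply.
Qed.

Lemma olt_le_trans a b c : olt a b -> ole b c -> olt a c.
Proof.
case: b c => J g [K h] /= [j ag] bc; have [k gh] := bc j.
by exists k; exact: ole_trans ag gh.
Qed.

Lemma ole_lt_trans a b c : ole a b -> olt b c -> olt a c.
Proof. by case: c => K h /= ab [k bh]; exists k; exact: ole_trans ab bh. Qed.

Lemma ozero_lt a : ~ ole a ozero -> olt ozero a.
Proof.
case: a => I f /= a_gt0.
have [i _] : exists i : I, True.
  by apply: contrapT => noI; apply: a_gt0 => i; case: noI; exists i.
by exists i; case: (f i).
Qed.

Lemma oleVgt a b : ole a b \/ olt b a.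
Proof.
elim: a b => I f IH [J g].
have [ab|] := pselect (ole (osup f) (osup g)); first by left.
move=> /= /existsNP [i fg]; right; exists i.
case E: (f i) => [K h] /= j.
have [fj|] := IH i (g j); last by rewrite E.
by exfalso; apply: fg; exists j.
Qed.

Lemma ole_omaxl a b : ole a (omax a b).
Proof. by case: a b => I f [J g] /= i; exists (inl i); exact: ole_refl. Qed.

Lemma ole_omaxr a b : ole b (omax a b).
Proof. by case: a b => I f [J g] /= j; exists (inr j); exact: ole_refl. Qed.

Lemma omax_le a b c : ole a c -> ole b c -> ole (omax a b) c.
Proof.
by case: a b c => I f [J g] [K h] /= ac bc [i|j]; [exact: ac | exact: bc].
Qed.

Lemma omax_lt a b c : olt a c -> olt b c -> olt (omax a b) c.
Proof.
move=> ac bc; have [ab|ba] := oleVgt a b.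
  exact: ole_lt_trans (omax_le ab (ole_refl b)) bc.
exact: ole_lt_trans (omax_le (ole_refl a) (oltW ba)) ac.
Qed.

Lemma olt_wf : well_founded olt.
Proof.
suff acc b a : ole a b -> Acc olt a by move=> a; exact: acc (ole_refl a).
elim: b a => J g IH [I f] ab; constructor=> c /= [i cf].
have [j fg] := ab i; exact: IH (ole_trans cf fg).
Qed.

Section ContinuousPullback.
Context {S T : topologicalType} (f : S -> T).
Hypothesis f_cont : continuous f.

Lemma image_closure_subset (E : set S) : f @` closure E `<=` closure (f @` E).
Proof.
have cl : closed (f @^-1` closure (f @` E)).
  by apply: (continuous_closedP f).1 => //; exact: closed_closure.
suff sub : closure E `<=` f @^-1` closure (f @` E) by move=> _ [x /sub + <-].
move/closure_id: cl => ->; apply: closureS => x Ex.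
by apply: subset_closure; exists x.
Qed.

Lemma image_sub_bracket (A : set S) (B : set T) x :
  f @` A `<=` B -> f @` sub_bracket A x `<=` sub_bracket B (f x).
Proof.
move=> fAB _ [y [Ay yx] <-]; split; first by apply: fAB; exists y.
move=> W oW Wfx; have oU : open (f @^-1` W) by exact: (continuousP f).1.
apply: closureS (image_closure_subset (imageP f (yx _ oU Wfx))).
move=> _ [z [Wz Az] <-].
by split=> //; apply: fAB; exists z.
Qed.

Lemma sub_hausdorff_sep_preimage (A : set S) (B : set T) x y :
  f @` A `<=` B -> sub_hausdorff B -> A x -> A y -> f x <> f y ->
  exists U V : set S, [/\ open U, open V, U x, V y & U `&` V `&` A = set0].
Proof.
move=> fAB hB Ax Ay fxy.
have [U [V [oU oV Ufx Vfy UVB]]] :=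
  hB _ _ (fAB _ (imageP f Ax)) (fAB _ (imageP f Ay)) fxy.
exists (f @^-1` U), (f @^-1` V); split => //; try exact: (continuousP f).1.
apply/seteqP; split => // z [[Uz Vz] Az].
suff : (U `&` V `&` B) (f z) by rewrite UVB.
by split => //; apply: fAB; exists z.
Qed.

Lemma sub_T1_sep_preimage (A : set S) (B : set T) x y :
  f @` A `<=` B -> sub_T1 B -> A x -> A y -> f x <> f y ->
  exists U : set S, [/\ open U, U x & ~ U y].
Proof.
move=> fAB t1B Ax Ay fxy.
have [U [oU Ufx Ufy]] :=
  t1B _ _ (fAB _ (imageP f Ax)) (fAB _ (imageP f Ay)) fxy.
by exists (f @^-1` U); split => //; exact: (continuousP f).1.
Qed.

Hypothesis f_inj : injective f.

Lemma sub_alpha_hausdorff_pullback c (A : set S) (B : set T) :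
  f @` A `<=` B -> sub_alpha_hausdorff c B -> sub_alpha_hausdorff c A.
Proof.
elim/(well_founded_ind olt_wf): c A B => c IH A B fAB hB.
case: hB IH fAB => [{}c {}B c0 hB _ fAB | {}c {}B c_gt0 t1B brB IH fAB].
  apply: SAH0 => // x y Ax Ay /(contra_not (@f_inj x y)).
  exact: sub_hausdorff_sep_preimage fAB hB Ax Ay.
apply: SAHS => //.
  move=> x y Ax Ay /(contra_not (@f_inj x y)).
  exact: sub_T1_sep_preimage fAB t1B Ax Ay.
move=> x Ax; have [b [bc brb]] := brB _ (fAB _ (imageP f Ax)).
by exists b; split => //; apply: IH brb => //; exact: image_sub_bracket.
Qed.

End ContinuousPullback.

Lemma sub_alpha_hausdorffS {T : topologicalType} c (A B : set T) :
  A `<=` B -> sub_alpha_hausdorff c B -> sub_alpha_hausdorff c A.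
Proof.
move=> AB; apply: (@sub_alpha_hausdorff_pullback _ _ idfun) => //.
- by move=> x; exact: cvg_id.
- by move=> _ [x Ax <-]; exact: AB.
Qed.

Section AlphaHausdorff.
Context {T : topologicalType}.
Implicit Types (A : set T) (a c : Ord).

Lemma sub_hausdorff_T1 A : sub_hausdorff A -> sub_T1 A.
Proof.
move=> hA x y Ax Ay xy; have [U [V [oU oV Ux Vy UVA]]] := hA x y Ax Ay xy.
by exists U; split => // Uy; rewrite -[False]/(set0 y) -UVA.
Qed.

Lemma sub_bracket_hausdorff A x :
  sub_hausdorff A -> A x -> sub_bracket A x `<=` [set x].
Proof.
move=> hA Ax y [Ay yx]; apply: contrapT => /nesym xy.
have [U [V [oU oV Ux Vy UVA]]] := hA x y Ax Ay xy.
have [z [[Uz Az] Vz]] := yx U oU Ux V (open_nbhs_nbhs (conj oV Vy)).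
by rewrite -[False]/(set0 z) -UVA.
Qed.

Lemma sub_alpha_hausdorff0 a A :
  ole a ozero -> sub_alpha_hausdorff a A -> sub_hausdorff A.
Proof.
by move=> a0 h; case: h a0 => [{}a {}A _ hA _ | {}a {}A a_gt0 _ _ /a_gt0].
Qed.

Lemma sub_alpha_hausdorff_T1 a A : sub_alpha_hausdorff a A -> sub_T1 A.
Proof. by case=> // {}a {}A _; exact: sub_hausdorff_T1. Qed.

(* In the Hausdorff case the bracket is a singleton, hence of rank 0 < c. *)
Lemma sub_bracket_rank_lt a c A x :
  ~ ole c ozero -> ole a c -> sub_alpha_hausdorff a A -> A x ->
  exists2 b, olt b c & sub_alpha_hausdorff b (sub_bracket A x).
Proof.
move=> c_gt0 ac h; case: h ac => [{}a {}A _ hA _ Ax | {}a {}A _ _ brA ac Ax].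
  exists ozero; first exact: ozero_lt.
  apply: SAH0; first exact: ole_refl.
  have brx := sub_bracket_hausdorff hA Ax.
  by move=> y z /brx -> /brx ->.
have [b [ba brb]] := brA x Ax; exists b => //; exact: olt_le_trans ba ac.
Qed.

End AlphaHausdorff.

Section Product.
Context {X Y : topologicalType}.
Implicit Types (A : set X) (B : set Y).

Lemma fst_continuous : continuous (@fst X Y).
Proof. by case=> x y; exact: cvg_fst. Qed.

Lemma snd_continuous : continuous (@snd X Y).
Proof. by case=> x y; exact: cvg_snd. Qed.

Lemma image_fst_setX A B : fst @` (A `*` B) `<=` A.
Proof. by move=> _ [p [Ap _] <-]. Qed.

Lemma image_snd_setX A B : snd @` (A `*` B) `<=` B.
Proof. by move=> _ [p [_ Bp] <-]. Qed.

Lemma sub_hausdorffX A B :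
  sub_hausdorff A -> sub_hausdorff B -> sub_hausdorff (A `*` B).
Proof.
move=> hA hB [x1 y1] [x2 y2] ABp ABq pq; have [x12|] := pselect (x1 = x2).
  apply: (sub_hausdorff_sep_preimage snd_continuous (@image_snd_setX A B) hB ABp ABq).
  move=> /= y12; by apply: pq; rewrite x12 y12.
exact: (sub_hausdorff_sep_preimage fst_continuous (@image_fst_setX A B) hA ABp ABq).
Qed.

Lemma sub_T1X A B : sub_T1 A -> sub_T1 B -> sub_T1 (A `*` B).
Proof.
move=> t1A t1B [x1 y1] [x2 y2] ABp ABq pq; have [x12|] := pselect (x1 = x2).
  apply: (sub_T1_sep_preimage snd_continuous (@image_snd_setX A B) t1B ABp ABq).
  move=> /= y12; by apply: pq; rewrite x12 y12.
exact: (sub_T1_sep_preimage fst_continuous (@image_fst_setX A B) t1A ABp ABq).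
Qed.

Lemma sub_bracketX A B p :
  sub_bracket (A `*` B) p `<=` sub_bracket A p.1 `*` sub_bracket B p.2.
Proof.
move=> q brq; split.
  exact: (image_sub_bracket fst_continuous (@image_fst_setX A B)) (imageP fst brq).
exact: (image_sub_bracket snd_continuous (@image_snd_setX A B)) (imageP snd brq).
Qed.

Lemma sub_alpha_hausdorffX c a b A B : ole a c -> ole b c ->
  sub_alpha_hausdorff a A -> sub_alpha_hausdorff b B ->
  sub_alpha_hausdorff c (A `*` B).
Proof.
elim/(well_founded_ind olt_wf): c a b A B => c IH a b A B ac bc hA hB.
have [c0|c_gt0] := pselect (ole c ozero).
  apply: SAH0 => //; apply: sub_hausdorffX.
    exact: sub_alpha_hausdorff0 (ole_trans ac c0) hA.
  exact: sub_alpha_hausdorff0 (ole_trans bc c0) hB.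
apply: SAHS => //.
  exact: sub_T1X (sub_alpha_hausdorff_T1 hA) (sub_alpha_hausdorff_T1 hB).
move=> [x y] [/= Ax By].
have [a' a'c hA'] := sub_bracket_rank_lt c_gt0 ac hA Ax.
have [b' b'c hB'] := sub_bracket_rank_lt c_gt0 bc hB By.
exists (omax a' b'); split; first exact: omax_lt.
apply: (sub_alpha_hausdorffS (@sub_bracketX A B (x, y))).
exact: IH (omax_lt a'c b'c) _ _ _ _ (ole_omaxl _ _) (ole_omaxr _ _) hA' hB'.
Qed.

Lemma pair_l_continuous (y : Y) : continuous (fun x : X => (x, y)).
Proof.
by move=> x; apply: cvg_pair => /=; [exact: cvg_id | exact: cvg_cst].
Qed.

Lemma pair_r_continuous (x : X) : continuous (fun y : Y => (x, y)).
Proof.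
by move=> y; apply: cvg_pair => /=; [exact: cvg_cst | exact: cvg_id].
Qed.

End Product.

Theorem theorem19 (X Y : topologicalType) (a b : Ord)
  (neX : inhabited X) (neY : inhabited Y)
  (T1X : @accessible_space X) (T1Y : @accessible_space Y)
  (rX : rankT2_is X a) (rY : rankT2_is Y b) :
  peripherally_hausdorff (X * Y)%type /\ rankT2_is (X * Y)%type (omax a b).
Proof.
(* T1X and T1Y are redundant: alpha-Hausdorff spaces are T1. *)
case: rX rY neX neY => [hX minX] [hY minY] [x0] [y0].
have hXY : alpha_hausdorff (X * Y)%type (omax a b).
  rewrite /alpha_hausdorff -setXTT.
  exact: sub_alpha_hausdorffX (ole_omaxl a b) (ole_omaxr a b) hX hY.
split; first by exists (omax a b).
split => // c hc; apply: omax_le.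
  apply: minX; apply: sub_alpha_hausdorff_pullback hc => //.
  - exact: pair_l_continuous.
  - by move=> x1 x2 [].
apply: minY; apply: sub_alpha_hausdorff_pullback hc => //.
- exact: pair_r_continuous.
- by move=> y1 y2 [].
Qed.
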